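(* For all integers $0\le a\le b$, $$\sum_{s=0}^{a}(-1)^sq^{s^2-s}\binom{2b-2s}{2a-2s}_q\binom{b}{s}_{q^2}=q^{2a^2-a}\frac{(q^{2b-4a+2};q^2)_{2a}}{(q;q)_{2a}}.$$
   Context: $(x;t)_m=\prod_{j=0}^{m-1}(1-xt^j)$ is the $q$-Pochhammer symbol and $\binom{c}{d}_t=\prod_{j=0}^{d-1}\frac{1-t^{c-j}}{1-t^{j+1}}$ the $q$-binomial coefficient; identities are of rational functions in $q$. *)

From HB Require Import structures.
From mathcomp Require Import all_boot all_order all_algebra.
From mathcomp Require Import fraction.
Set Implicit Arguments. Unset Strict Implicit. Unset Printing Implicit Defensive.
Import Order.TTheory GRing.Theory Num.Theory.
Local Open Scope ring_scope.

Definition RF := {fraction {poly rat}}.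

Definition qv : RF := tofrac ('X : {poly rat}).

Definition qpoch (x t : RF) (m : nat) : RF :=
  \prod_(j < m) (1 - x * t ^+ j).

(* q-binomial coefficient binom(c,d)_t = prod_{j=0}^{d-1} (1 - t^(c-j)) / (1 - t^(j+1)),
   with c - j an honest integer exponent. *)
Definition qbinom (t : RF) (c d : nat) : RF :=
  \prod_(j < d) ((1 - t ^ (c%:Z - j%:Z)) / (1 - t ^+ j.+1)).

(* Fix b and write al = q^(2a), Z = q^(2(b-a-1)).  Both sides, as functions of a,
   satisfy the first-order recurrence
     (1 - q al)(1 - q^2 al) F(a+1) = q al^2 (1 - Z/al)(1 - q^2 Z/al) F(a)
   and equal 1 at a = 0.  For the right-hand side this is a ratio of q-Pochhammer
   symbols.  For the left-hand side it is creative telescoping: the recurrence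
   applied to the s-th summand is G(s+1) - G(s), where G(s) is the s-th summand at
   a+1 times an explicit rational function [wz_cert] of q^(2s); the sum collapses to
   G(a+1) - G(0), which cancels the top summand at a+1 since G(0) = 0. *)
From HB Require Import structures.
From mathcomp Require Import all_boot all_order all_algebra.
From mathcomp Require Import fraction.
From mathcomp Require Import ring zify.
Import Order.TTheory GRing.Theory Num.Theory.
Local Open Scope ring_scope.

Lemma qv_neq0 : qv != 0.
Proof. by rewrite /qv tofrac_eq0 polyX_eq0. Qed.

Lemma one_sub_qvX_neq0 (n : nat) : (0 < n)%N -> 1 - qv ^+ n != 0.
Proof.
move=> n_gt0; rewrite /qv -tofracXn -tofrac1 -tofracB tofrac_eq0 subr_eq0.
apply/eqP => /(congr1 (fun p : {poly rat} => p`_n)).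
by rewrite coefXn coef1 eqxx; case: n n_gt0.
Qed.

Lemma qvz_sub (m n : nat) : qv ^ (m%:Z - n%:Z) = qv ^+ m / qv ^+ n.
Proof. by rewrite expfzDr ?qv_neq0 // -invr_expz. Qed.

Lemma qpoch_recl (x t : RF) n : qpoch x t n.+1 = (1 - x) * qpoch (x * t) t n.
Proof.
rewrite /qpoch big_ord_recl expr0 mulr1; congr (_ * _).
by apply: eq_bigr => j _; rewrite exprS mulrA.
Qed.

Lemma qpoch_recr (x t : RF) n : qpoch x t n.+1 = qpoch x t n * (1 - x * t ^+ n).
Proof. by rewrite /qpoch big_ord_recr. Qed.

Lemma qpoch_qv_neq0 n : qpoch qv qv n != 0.
Proof.
rewrite /qpoch prodf_seq_neq0; apply/allP => j _ /=.
by rewrite -exprS one_sub_qvX_neq0.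
Qed.

Lemma qbinom_recr (t : RF) c d : qbinom t c d.+1 =
  qbinom t c d * ((1 - t ^ (c%:Z - d%:Z)) / (1 - t ^+ d.+1)).
Proof. by rewrite /qbinom big_ord_recr. Qed.

Lemma qbinomSS (t : RF) c d : qbinom t c.+1 d.+1 =
  qbinom t c d * ((1 - t ^+ c.+1) / (1 - t ^+ d.+1)).
Proof.
rewrite /qbinom !prodf_div big_ord_recl big_ord_recr /= subr0.
rewrite (eq_bigr (fun j : 'I_d => 1 - t ^ (c%:Z - j%:Z))); last first.
  by move=> j _; congr (_ - _ ^ _); rewrite /bump /= -addn1 !PoszD; ring.
by rewrite !mulf_div; congr (_ / _); rewrite mulrC.
Qed.

Definition wz_cert {F : fieldType} (q al Z X : F) : F :=
  let D := (1 - q * Z) * (1 - q ^+ 2 * Z) in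
  (1 - X) * (1 - q ^+ 3 * al * Z / X) *
  (- (1 - q * Z - q ^+ 2 * Z + q ^+ 3 * al * Z) / D
   + q * al * (q ^+ 2 * al - q ^+ 2 * Z) / D / X).

Section CertificateIdentities.
Variable F : fieldType.

Local Ltac field_neq0 :=
  field; repeat (apply/andP; split); rewrite ?mulf_neq0 ?expf_neq0.

Lemma wz_cert_top (q al Z : F) : q != 0 -> al != 0 ->
  1 - q * Z != 0 -> 1 - q ^+ 2 * Z != 0 ->
  wz_cert q al Z (q ^+ 2 * al) + (1 - q * al) * (1 - q ^+ 2 * al) = 0.
Proof.
by move=> *; rewrite /wz_cert; field_neq0.
Qed.

(* Used with X = q^(2s), Y = q^(2(a-s)): then [Bu] is (c+2 choose d+2)_q for
   c = 2(b-s-1), d = 2(a-s), and the last two hypotheses express it through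
   w = (c choose d)_q and v = (c+2 choose d)_q. *)
Lemma wz_cert_step (q X Y Z P qb v w Bu : F) :
  q != 0 -> X != 0 -> Y != 0 ->
  1 - q * Z != 0 -> 1 - q ^+ 2 * Z != 0 ->
  1 - q * Y != 0 -> 1 - q ^+ 2 * Y != 0 ->
  1 - q * Y * Z != 0 -> 1 - q ^+ 2 * Y * Z != 0 -> 1 - q ^+ 2 * X != 0 ->
  Bu = w * ((1 - q * Y * Z) / (1 - q * Y)) * ((1 - q ^+ 2 * Y * Z) / (1 - q ^+ 2 * Y)) ->
  Bu = v * ((1 - q ^+ 2 * Z) / (1 - q * Y)) * ((1 - q * Z) / (1 - q ^+ 2 * Y)) ->
  (1 - q * (X * Y)) * (1 - q ^+ 2 * (X * Y)) * (P * Bu * qb)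
  - q * (X * Y) * (X * Y) * (1 - Z / (X * Y)) * (1 - q ^+ 2 * Z / (X * Y)) * (P * v * qb)
  = (- P * X * w * (qb * ((1 - q ^+ 2 * Y * Z) / (1 - q ^+ 2 * X))))
      * wz_cert q (X * Y) Z (q ^+ 2 * X)
    - (P * Bu * qb) * wz_cert q (X * Y) Z X.
Proof.
move=> q0 X0 Y0 qZ1 qZ2 qY1 qY2 qYZ1 qYZ2 qX2 hw hv.
have -> : w = Bu / (((1 - q * Y * Z) / (1 - q * Y)) * ((1 - q ^+ 2 * Y * Z) / (1 - q ^+ 2 * Y))).
  by rewrite hw; field_neq0.
have -> : v = Bu / (((1 - q ^+ 2 * Z) / (1 - q * Y)) * ((1 - q * Z) / (1 - q ^+ 2 * Y))).
  by rewrite hv; field_neq0.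
by rewrite /wz_cert /=; field_neq0.
Qed.

Lemma rhs_ratio (q al Z E Qx Qq : F) :
  al != 0 -> Qq != 0 -> 1 - q * al != 0 -> 1 - q * (q * al) != 0 ->
  (1 - q * al) * (1 - q ^+ 2 * al) *
  (E * (q * al * al) * ((1 - Z / al) * ((1 - Z / al * q ^+ 2) * Qx)) /
   (Qq * (1 - q * al) * (1 - q * (q * al))))
  = q * al * al * (1 - Z / al) * (1 - q ^+ 2 * Z / al) * (E * Qx / Qq).
Proof. by move=> *; field_neq0. Qed.

End CertificateIdentities.

Definition lhs_term (b a s : nat) : RF :=
  (-1) ^+ s * qv ^+ (s * s - s) * qbinom qv (2 * b - 2 * s) (2 * a - 2 * s)
    * qbinom (qv ^+ 2) b s.

Definition lhs (b a : nat) : RF := \sum_(0 <= s < a.+1) lhs_term b a s.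

Definition rhs (b a : nat) : RF := qv ^+ (2 * a * a - a)
    * qpoch (qv ^ (2 * b%:Z - 4 * a%:Z + 2)) (qv ^+ 2) (2 * a)
    / qpoch qv qv (2 * a).

Section Recurrence.
Variables a k : nat.
Let b := (a.+1 + k)%N.
Let al := qv ^+ (2 * a).
Let Z := qv ^+ (2 * k).
Let c1 := (1 - qv * al) * (1 - qv ^+ 2 * al).
Let c0 := qv * al * al * (1 - Z / al) * (1 - qv ^+ 2 * Z / al).

Lemma c1_neq0 : c1 != 0.
Proof. by rewrite mulf_neq0 // /al -?exprS -?exprD one_sub_qvX_neq0 //; lia. Qed.

Lemma rhs_rec : c1 * rhs b a.+1 = c0 * rhs b a.
Proof.
rewrite /rhs /c1 /c0.
have -> : 2 * b%:Z - 4 * (a.+1)%:Z + 2 = (2 * k)%:Z - (2 * a)%:Z by rewrite /b; lia.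
have -> : 2 * b%:Z - 4 * a%:Z + 2 = (2 * k + 4)%:Z - (2 * a)%:Z by rewrite /b; lia.
rewrite !qvz_sub.
rewrite (_ : (2 * a.+1 * a.+1 - a.+1 = (2 * a * a - a) + (1 + 2 * a + 2 * a))%N); last by nia.
rewrite (_ : (2 * a.+1 = (2 * a).+2)%N); last by lia.
rewrite (qpoch_recr qv qv (2 * a).+1) (qpoch_recr qv qv (2 * a)).
rewrite (qpoch_recl _ _ (2 * a).+1) (qpoch_recl _ _ (2 * a)).
rewrite (_ : qv ^+ (2 * k + 4) / qv ^+ (2 * a)
           = qv ^+ (2 * k) / qv ^+ (2 * a) * qv ^+ 2 * qv ^+ 2); last first.
  by rewrite !exprD (_ : 4 = 2 + 2)%N // exprD; ring.
rewrite exprD (_ : qv ^+ (1 + 2 * a + 2 * a) = qv * al * al); last by rewrite /al !exprD expr1.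
rewrite (exprS qv (2 * a)) -/al -/Z.
apply: rhs_ratio.
- by rewrite expf_neq0 ?qv_neq0.
- exact: qpoch_qv_neq0.
- by rewrite /al -exprS one_sub_qvX_neq0.
- by rewrite /al -exprS -exprS one_sub_qvX_neq0.
Qed.

Let G (s : nat) := lhs_term b a.+1 s * wz_cert qv al Z (qv ^+ (2 * s)).

Lemma lhs_term_telescope s : (s <= a)%N ->
  c1 * lhs_term b a.+1 s - c0 * lhs_term b a s = G s.+1 - G s.
Proof.
move=> le_sa; rewrite /G /c1 /c0.
pose X := qv ^+ (2 * s). pose Y := qv ^+ (2 * a - 2 * s).
pose c := (2 * a - 2 * s + 2 * k)%N. pose d := (2 * a - 2 * s)%N.
have eal : al = X * Y by rewrite /al /X /Y -exprD; congr (_ ^+ _); lia.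
have eX : qv ^+ (2 * s.+1) = qv ^+ 2 * X by rewrite /X -exprD; congr (_ ^+ _); lia.
pose P := (-1) ^+ s * qv ^+ (s * s - s) : RF.
pose qb := qbinom (qv ^+ 2) b s.
pose w := qbinom qv c d.
have top : lhs_term b a.+1 s.+1
    = - P * X * w * (qb * ((1 - qv ^+ 2 * Y * Z) / (1 - qv ^+ 2 * X))).
  rewrite /lhs_term qbinom_recr.
  have -> : (2 * b - 2 * s.+1 = c)%N by rewrite /c /b; lia.
  have -> : (2 * a.+1 - 2 * s.+1 = d)%N by rewrite /d; lia.
  have -> : b%:Z - s%:Z = (1 + (a - s) + k)%N%:Z :> int by rewrite /b; lia.
  rewrite -exprnP -!exprM.
  rewrite (_ : (2 * (1 + (a - s) + k) = 2 + (2 * a - 2 * s) + 2 * k)%N); last by lia.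
  rewrite (exprD qv (2 + (2 * a - 2 * s)) (2 * k)) (exprD qv 2 (2 * a - 2 * s)) -/Y -/Z.
  rewrite (_ : (2 * s.+1 = 2 + 2 * s)%N); last by lia.
  rewrite (exprD qv 2 (2 * s)) -/X -/w -/qb.
  rewrite (_ : (s.+1 * s.+1 - s.+1 = (s * s - s) + 2 * s)%N); last by nia.
  by rewrite exprS exprD -/X /P mulN1r !mulNr !mulrA.
rewrite top /lhs_term.
have -> : (2 * b - 2 * s = c.+2)%N by rewrite /c /b; lia.
have -> : (2 * a.+1 - 2 * s = d.+2)%N by rewrite /d; lia.
rewrite -/d.
pose v := qbinom qv c.+2 d.
have ec1 : qv ^+ c.+1 = qv * Y * Z by rewrite exprS /c exprD mulrA.
have ec2 : qv ^+ c.+2 = qv ^+ 2 * Y * Z by rewrite -addn2 addnC exprD /c exprD mulrA.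
have ed1 : qv ^+ d.+1 = qv * Y by rewrite exprS.
have ed2 : qv ^+ d.+2 = qv ^+ 2 * Y by rewrite -addn2 addnC exprD.
have hw : qbinom qv c.+2 d.+2
    = w * ((1 - qv * Y * Z) / (1 - qv * Y)) * ((1 - qv ^+ 2 * Y * Z) / (1 - qv ^+ 2 * Y)).
  by rewrite !qbinomSS -/w ec1 ec2 ed1 ed2.
have hv : qbinom qv c.+2 d.+2
    = v * ((1 - qv ^+ 2 * Z) / (1 - qv * Y)) * ((1 - qv * Z) / (1 - qv ^+ 2 * Y)).
  rewrite !qbinom_recr -/v ed1 ed2.
  have -> : (c.+2)%:Z - (d.+1)%:Z = (1 + 2 * k)%N%:Z :> int by rewrite /c /d; lia.
  have -> : (c.+2)%:Z - d%:Z = (2 + 2 * k)%N%:Z :> int by rewrite /c /d; lia.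
  by rewrite -!exprnP (exprD qv 1 (2 * k)) (exprD qv 2 (2 * k)) expr1 -/Z.
rewrite -/P -/qb -/v eX eal.
apply: wz_cert_step hw hv.
- exact: qv_neq0.
- by rewrite expf_neq0 ?qv_neq0.
- by rewrite expf_neq0 ?qv_neq0.
- by rewrite -exprS one_sub_qvX_neq0.
- by rewrite -exprD one_sub_qvX_neq0 //; lia.
- by rewrite -exprS one_sub_qvX_neq0.
- by rewrite -exprD one_sub_qvX_neq0 //; lia.
- by rewrite -ec1 one_sub_qvX_neq0.
- by rewrite -ec2 one_sub_qvX_neq0.
- by rewrite -eX one_sub_qvX_neq0 //; lia.
Qed.

Lemma lhs_rec : c1 * lhs b a.+1 = c0 * lhs b a.
Proof.
have tel : \sum_(0 <= s < a.+1) (c1 * lhs_term b a.+1 s - c0 * lhs_term b a s)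
           = G a.+1 - G 0%N.
  by apply: telescope_sumr_eq => // s /andP [_ lt_sa]; rewrite lhs_term_telescope.
have G0 : G 0%N = 0 by rewrite /G /wz_cert expr0 subrr !mul0r mulr0.
have Gtop : G a.+1 + c1 * lhs_term b a.+1 a.+1 = 0.
  have eX : qv ^+ (2 * a.+1) = qv ^+ 2 * al by rewrite /al -exprD; congr (_ ^+ _); lia.
  rewrite /G eX (mulrC c1) -mulrDr /c1 wz_cert_top ?mulr0 //.
  - exact: qv_neq0.
  - by rewrite expf_neq0 ?qv_neq0.
  - by rewrite -exprS one_sub_qvX_neq0.
  - by rewrite -exprD one_sub_qvX_neq0 //; lia.
rewrite /lhs big_nat_recr //= mulrDr !mulr_sumr.
move/eqP: tel; rewrite sumrB G0 subr0 subr_eq => /eqP ->.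
by rewrite addrC addrA (addrC _ (G a.+1)) Gtop add0r.
Qed.

End Recurrence.

Lemma lhs_eq_rhs b a : (a <= b)%N -> lhs b a = rhs b a.
Proof.
elim: a => [|a IH] le_ab.
  by rewrite /lhs /rhs /lhs_term /qbinom /qpoch big_nat1 !big_ord0 !mulr1 !expr0 invr1 mulr1.
have [k def_b] : exists k, b = (a.+1 + k)%N by exists (b - a.+1)%N; lia.
apply: (mulfI (c1_neq0 a)); rewrite def_b lhs_rec rhs_rec -def_b IH //; lia.
Qed.

Theorem mainTheorem9 (a b : nat) (hab : (a <= b)%N) :
  \sum_(0 <= s < a.+1)
     (-1) ^+ s * qv ^+ (s * s - s) * qbinom qv (2 * b - 2 * s) (2 * a - 2 * s)
       * qbinom (qv ^+ 2) b s
  = qv ^+ (2 * a * a - a)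
    * qpoch (qv ^ (2 * b%:Z - 4 * a%:Z + 2)) (qv ^+ 2) (2 * a)
    / qpoch qv qv (2 * a).
Proof. exact: lhs_eq_rhs. Qed.
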